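(* Consider the secure distributed linearly separable computation problem with parameters $(\mathsf K,\mathsf N,\mathsf N_{\rm r},\mathsf K_{\rm c},\mathsf M)$ where $\mathsf K_{\rm c}=1$ and $\mathsf M=\frac{\mathsf K}{\mathsf N}(\mathsf N-\mathsf N_{\rm r}+1)$. Then the optimal communication cost is $\mathsf R^\star=\mathsf N_{\rm r}$.
   Context: Problem setting. $\mathsf K,\mathsf N,\mathsf N_{\rm r},\mathsf M$ are positive integers with $\mathsf N_{\rm r}\le \mathsf N$ and $\mathsf N$ dividing $\mathsf K$. Fix a prime power $\mathsf q$ (assumed sufficiently large) and a positive integer $\mathsf L$. There are $\mathsf K$ independent datasets $D_1,\dots,D_{\mathsf K}$; the message $W_k=f_k(D_k)\in\mathbb F_{\mathsf q}^{\mathsf L}$, and $W_1,\dots,W_{\mathsf K}$ are mutually independent, each uniformly distributed over $\mathbb F_{\mathsf q}^{\mathsf L}$. Since $\mathsf K_{\rm c}=1$, the user wants $W_1+\cdots+W_{\mathsf K}$. A (secure) scheme consists of: (i) an assignment $\mathbf Z=(\mathcal Z_1,\dots,\mathcal Z_{\mathsf N})$ with $\mathcal Z_n\subseteq[\mathsf K]$ and $|\mathcal Z_n|\le \mathsf M$ (server $n$ receives the datasets indexed by $\mathcal Z_n$); (ii) a random variable $Q$ on a finite set, independent of $(D_1,\dots,D_{\mathsf K})$, given to every server but not to the user; (iii) each server $n$ sends $X_n=\psi_n(\{W_k:k\in\mathcal Z_n\},Q)\in\mathbb F_{\mathsf q}^{\mathsf T_n}$; (iv) decodability: for every $\mathcal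 A\subseteq[\mathsf N]$ with $|\mathcal A|=\mathsf N_{\rm r}$ there is a function $\phi_{\mathcal A}$ with $\phi_{\mathcal A}(\{X_n:n\in\mathcal A\})=W_1+\cdots+W_{\mathsf K}$; (v) security: $I(W_1,\dots,W_{\mathsf K};X_1,\dots,X_{\mathsf N}\mid W_1+\cdots+W_{\mathsf K})=0$. The communication cost is $\mathsf R=\max_{\mathcal A\subseteq[\mathsf N],|\mathcal A|=\mathsf N_{\rm r}}\sum_{n\in\mathcal A}\mathsf T_n/\mathsf L$, and $\mathsf R^\star$ is the minimum of $\mathsf R$ over all such secure schemes. *)

From HB Require Import structures.
From mathcomp Require Import all_boot all_order all_algebra all_field.
From mathcomp Require Import all_classical all_reals all_analysis.
Set Implicit Arguments. Unset Strict Implicit. Unset Printing Implicit Defensive.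
Import Order.TTheory GRing.Theory Num.Theory.
Local Open Scope ring_scope.

Section InfoTheory.
Variable R : realType.

Definition probE (Om : finType) (P : Om -> R) (E : pred Om) : R :=
  \sum_(o : Om | E o) P o.

Definition cond_mutual_info (Om : finType) (P : Om -> R)
  (TA TB TC : eqType) (A : Om -> TA) (B : Om -> TB) (C : Om -> TC) : R :=
  \sum_(o : Om) P o *
    ln ((probE P (fun o' => [&& A o' == A o, B o' == B o & C o' == C o])
          * probE P (fun o' => C o' == C o))
        / (probE P (fun o' => (A o' == A o) && (C o' == C o))
          * probE P (fun o' => (B o' == B o) && (C o' == C o)))).
End InfoTheory.

Section Scheme.
Variables (R : realType) (F : finFieldType) (K N Nr M L : nat).

Definition msgs := {ffun 'I_K -> 'rV[F]_L}.

Definition msg_sum (w : msgs) : 'rV[F]_L := \sum_(k < K) w k.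

Definition answers (S : finType) (T : 'I_N -> nat)
  (psi : forall n : 'I_N, msgs -> S -> 'rV[F]_(T n)) (ws : msgs * S)
  : {dffun forall n : 'I_N, 'rV[F]_(T n)} :=
  finfun (fun n => psi n ws.1 ws.2).

(* joint pmf of (W, Q): W uniform on (F^L)^K, independent of Q *)
Definition joint_pmf (S : finType) (pQ : S -> R) (ws : msgs * S) : R :=
  pQ ws.2 / (#|F| ^ (K * L))%:R.

Definition secure_scheme (S : finType) (pQ : S -> R)
  (Z : 'I_N -> {set 'I_K}) (T : 'I_N -> nat)
  (psi : forall n : 'I_N, msgs -> S -> 'rV[F]_(T n)) : Prop :=
  (forall s, 0 <= pQ s) /\ (\sum_(s : S) pQ s = 1) /\
  (forall n, #|Z n| <= M)%N /\
  (forall n (w w' : msgs) (s : S),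
      (forall k, k \in Z n -> w k = w' k) -> psi n w s = psi n w' s) /\
  (* (iv) decodability from any N_r servers (almost surely, i.e. on the
     support of Q; W is uniform so every w has positive probability) *)
  (forall A : {set 'I_N}, #|A| = Nr ->
     exists phi : (forall n : 'I_N, 'rV[F]_(T n)) -> 'rV[F]_L,
       forall (w : msgs) (s : S), 0 < pQ s ->
         phi (fun n => if n \in A then psi n w s else 0) = msg_sum w) /\
  cond_mutual_info (joint_pmf pQ) (fun ws : msgs * S => ws.1)
     (answers psi) (fun ws : msgs * S => msg_sum ws.1) = 0.

Definition comm_cost (T : 'I_N -> nat) : R :=
  (\max_(A : {set 'I_N} | #|A| == Nr) \sum_(n in A) T n)%N%:R / L%:R.
End Scheme.

From HB Require Import structures.
From mathcomp Require Import all_boot all_order all_algebra all_field.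
From mathcomp Require Import all_classical all_reals all_analysis.
From mathcomp Require Import zify.
Set Implicit Arguments. Unset Strict Implicit. Unset Printing Implicit Defensive.
Import Order.TTheory GRing.Theory Num.Theory.
Local Open Scope ring_scope.

(* Converse: if some message W_k were stored by at most N - Nr servers, any Nr
   servers not storing it would give the same answers for W = 0 and W = e_k, so
   they could not decode the sum.  Hence every message is stored at least
   N - Nr + 1 times; as N M = K (N - Nr + 1), double counting makes this tight:
   every server n stores some W_k, and exactly Nr - 1 servers miss W_k.  These
   together with n form a decoding set whose answers depend on W_k only through
   X_n, so X_n determines W_k and T_n >= L.  Summing over Nr servers, R >= Nr.

   Achievability: with the cyclic assignment, server n sends
   X_n = sum_k p_k(alpha_n) Y_k where Y = W + U, U is a uniform vector of messages
   with zero sum, and p_k is the polynomial of degree < Nr vanishing at the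
   alpha's of the Nr - 1 servers missing W_k with p_k(beta) = 1.  Any Nr servers
   interpolate at beta and recover sum_k Y_k = sum_k W_k; each answer has length
   L, so R = Nr.  Given W_1 + ... + W_K, the vector Y is uniform on the messages
   with that sum whatever W is, which is the security condition.  Distinct
   alpha_1, ..., alpha_N, beta exist once q >= N + 1. *)

Section Interpolation.
Variable F : fieldType.

(* Vanishes on [s] and equals 1 at [b] when [b \notin s]; when [b \in s] the
   normalizing inverse is the junk value [0^-1 = 0]. *)
Definition pinned_poly (s : seq F) (b : F) : {poly F} :=
  (\prod_(a <- s) (b - a))^-1 *: \prod_(a <- s) ('X - a%:P).

Lemma size_pinned_poly s b : (size (pinned_poly s b) <= (size s).+1)%N.
Proof. by rewrite (leq_trans (size_scale_leq _ _)) // size_prod_XsubC. Qed.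

Lemma pinned_poly_root s b a : a \in s -> (pinned_poly s b).[a] = 0.
Proof.
move=> sa; rewrite hornerZ horner_prod [X in _ * X](big_rem a) //=.
by rewrite hornerXsubC subrr mul0r mulr0.
Qed.

Lemma pinned_poly_pin s b : b \notin s -> (pinned_poly s b).[b] = 1.
Proof.
move=> sb; rewrite hornerZ horner_prod.
under [X in _ * X]eq_bigr do rewrite hornerXsubC.
rewrite mulVf // prodf_seq_neq0; apply/allP => a sa.
by rewrite subr_eq0; apply: contra sb => /eqP ->.
Qed.

Lemma interpolation_coef (I : finType) (A : {set I}) (x : I -> F) (b : F) :
  {in A &, injective x} ->
  exists c : I -> F, forall p : {poly F},
    (size p <= #|A|)%N -> p.[b] = \sum_(n in A) c n * p.[x n].
Proof.
move=> x_inj; pose l n := pinned_poly [seq x m | m <- enum (A :\ n)] (x n).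
have l_sample n m : n \in A -> m \in A -> (l n).[x m] = (n == m)%:R.
  move=> nA mA; have [<-|nm] := eqVneq n m.
    rewrite pinned_poly_pin //; apply/mapP => -[j]; rewrite mem_enum !inE.
    by case/andP=> jn jA /x_inj-/(_ nA jA) nj; rewrite nj eqxx in jn.
  by rewrite pinned_poly_root //; apply: map_f; rewrite mem_enum !inE eq_sym nm.
have size_l n : n \in A -> (size (l n) <= #|A|)%N.
  move=> nA; rewrite (leq_trans (size_pinned_poly _ _)) // size_map -cardE.
  by rewrite (cardsD1 n A) nA.
exists (fun n => (l n).[b]) => p size_p.
pose q := p - \sum_(n in A) p.[x n] *: l n.
have q0 : q = 0.
  apply: (@roots_geq_poly_eq0 _ _ [seq x n | n <- enum A]).
  - apply/allP => y /mapP[m]; rewrite mem_enum => mA ->.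
    rewrite /root /q hornerD hornerN horner_sum (bigD1 m) //= hornerZ.
    rewrite l_sample // eqxx mulr1 big1 ?addr0 ?subrr // => n /andP[nA nm].
    by rewrite hornerZ l_sample // (negbTE nm) mulr0.
  - by rewrite map_inj_in_uniq ?enum_uniq // => n m; rewrite !mem_enum; exact: x_inj.
  - rewrite size_map -cardE /q (leq_trans (size_polyD _ _)) // geq_max size_polyN.
    rewrite size_p; apply: (big_ind (fun r : {poly F} => size r <= #|A|)%N).
    + by rewrite size_poly0.
    + by move=> r r' ? ?; rewrite (leq_trans (size_polyD _ _)) // geq_max; apply/andP.
    + by move=> n nA; rewrite (leq_trans (size_scale_leq _ _)) ?size_l.
move/eqP: q0; rewrite subr_eq0 => /eqP {1}->; rewrite horner_sum.
by apply: eq_bigr => n _; rewrite hornerZ mulrC.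
Qed.

End Interpolation.

Lemma subset_card_exists (T : finType) (B : {set T}) (k : nat) :
  (k <= #|B|)%N -> exists2 A : {set T}, A \subset B & #|A| = k.
Proof.
case/card_geqP=> s [s_uniq <- sB]; exists [set x in s].
  by apply/fintype.subsetP => x; rewrite inE => /sB.
by rewrite cardsE; apply/card_uniqP.
Qed.

Lemma card_leq_size_in (T : finType) (U : eqType) (A : {set T}) (f : T -> U)
    (s : seq U) :
  {in A &, injective f} -> {in A, forall x, f x \in s} -> (#|A| <= size s)%N.
Proof.
move=> f_inj fA; rewrite cardE -(size_map f); apply: uniq_leq_size.
  by rewrite map_inj_in_uniq ?enum_uniq // => x y; rewrite !mem_enum; exact: f_inj.
by move=> y /mapP[x]; rewrite mem_enum => xA ->; exact: fA.
Qed.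

Lemma sum_card_incidence (I J : finType) (Z : I -> {set J}) :
  (\sum_j #|[set i | j \in Z i]| = \sum_i #|Z i|)%N.
Proof.
have card_sum (T : finType) (A : {set T}) : #|A| = (\sum_x (x \in A))%N.
  by rewrite -sum1_card big_mkcond.
under eq_bigr do rewrite card_sum.
rewrite exchange_big; apply: eq_bigr => i _; rewrite card_sum.
by apply: eq_bigr => j _; rewrite inE.
Qed.

Lemma leq_sum_eq (I : finType) (E1 E2 : I -> nat) :
  (forall i, E1 i <= E2 i)%N -> (\sum_i E2 i <= \sum_i E1 i)%N ->
  forall i, E1 i = E2 i.
Proof.
move=> le12 ge_sum.
have /leqifP := @leqif_sum I predT _ E1 E2 (fun i _ => leqif_eq (le12 i)).
rewrite ltnNge ge_sum; case: ifP => // /forallP eq12 _ i.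
exact/eqP/eq12.
Qed.

Section UniformMutualInfo.
Variables (R : realType) (Om : finType) (d : R).

Lemma probE_uniform (E : pred Om) : probE (fun=> d) E = d *+ #|E|.
Proof. by rewrite /probE sumr_const; congr (_ *+ _); apply: eq_card. Qed.

Lemma cond_mutual_info_uniform_eq0 (TA TB TC : eqType)
    (A : Om -> TA) (B : Om -> TB) (C : Om -> TC) :
  (forall o,
    #|fun o' => [&& A o' == A o, B o' == B o & C o' == C o]|
      * #|fun o' => C o' == C o|
    = #|fun o' => (A o' == A o) && (C o' == C o)|
      * #|fun o' => (B o' == B o) && (C o' == C o)|)%N ->
  cond_mutual_info (fun=> d) A B C = 0.
Proof.
move=> count_eq; apply: big1 => o _; rewrite !probE_uniform.
have mulrn2 m n : (d *+ m) * (d *+ n) = (d * d) *+ (m * n).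
  by rewrite mulrnAl mulrnAr -mulrnA mulnC.
have ln_divrr (y : R) : ln (y / y) = 0.
  have [->|y0] := eqVneq y 0; first by rewrite mul0r ln0.
  by rewrite divff // ln1.
by rewrite !mulrn2 count_eq ln_divrr mulr0.
Qed.

End UniformMutualInfo.

Lemma card_pair_sum (T1 T2 : finType) (P : pred (T1 * T2)) :
  #|P| = (\sum_x \sum_y P (x, y))%N.
Proof.
rewrite -sum1_card big_mkcond pair_big /=.
by apply: eq_bigr => -[x y] _; rewrite unfold_in; case: (P _).
Qed.

Section MaskedAnswers.
Variables (V : finZmodType) (Y : zmodType) (sigma : {additive V -> Y}).
Variables (X : eqType) (H : V -> X) (u : V -> V).
Hypothesis u_shift : forall v d, sigma d = 0 -> u (v + d) = u v + d.

Lemma masked_cond_mutual_info_eq0 (R : realType) (d : R) :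
  cond_mutual_info (fun=> d) fst (fun o : V * V => H (o.1 + u o.2))
    (fun o => sigma o.1) = 0.
Proof.
apply: cond_mutual_info_uniform_eq0 => -[w0 v0]; rewrite !card_pair_sum /=.
set s0 := sigma w0; set x0 := H (w0 + u v0).
pose n (w : V) := (\sum_v (H (w + u v)%R == x0))%N.
(* Shifting [v] by the zero-sum vector [w0 - w] turns the answers for [w]
   into those for [w0]. *)
have n_shift w : sigma w = s0 -> n w = n w0.
  move=> s_w; rewrite /n (reindex_inj (addIr (w0 - w))) /=.
  apply: eq_bigr => v _; rewrite u_shift ?raddfB ?s_w ?subrr //.
  by rewrite addrCA subrKC addrC.
pose S := (\sum_(w : V) (sigma w == s0))%N.
have sum_at_w0 (Q : V -> V -> bool) :
    (\sum_(w : V) \sum_(v : V) ((w == w0) && Q w v) = \sum_(v : V) Q w0 v)%N.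
  rewrite (bigD1 w0) //= eqxx [X in (_ + X)%N]big1 ?addn0 // => w /negbTE w_w0.
  by apply: big1 => v _; rewrite w_w0.
have count_c : (\sum_(w : V) \sum_(v : V) (sigma w == s0) = S * #|V|)%N.
  by rewrite /S big_distrl; apply: eq_bigr => w _; rewrite sum_nat_const mulnC.
have count_bc :
    (\sum_w \sum_v ((H (w + u v)%R == x0) && (sigma w == s0)) = S * n w0)%N.
  rewrite /S big_distrl; apply: eq_bigr => w _.
  case: eqP => [/n_shift <-|_] /=; last by rewrite mul0n big1 // => v _; rewrite andbF.
  by rewrite mul1n; apply: eq_bigr => v _; rewrite andbT.
rewrite (eq_bigr (fun w => \sum_v ((w == w0) && (H (w + u v)%R == x0)))%N);
  last by move=> w _; apply: eq_bigr => v _; case: eqP => // ->; rewrite eqxx andbT.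
rewrite !sum_at_w0 count_c count_bc eqxx sum_nat_const /= muln1 -/(n w0).
by rewrite mulnCA [RHS]mulnCA [(n w0 * _)%N]mulnC.
Qed.

End MaskedAnswers.

Section CyclicAssignment.
Variables (K N' Nr : nat).
Local Notation N := N'.+1.
Hypotheses (Nr_gt0 : (0 < Nr)%N) (Nr_leN : (Nr <= N)%N) (N_dvd_K : (N %| K)%N).

Definition msg_class (k : 'I_K) : 'I_N := Ordinal (ltn_pmod k (ltn0Sn N')).

(* Class [j] (messages [k = j mod N]) is stored by the [N - Nr + 1] cyclically
   consecutive servers [j, j + 1, ..., j + N - Nr]. *)
Definition stores (n : 'I_N) (k : 'I_K) : bool := ((n - msg_class k)%R <= N - Nr)%N.

Definition cyclic_assignment (n : 'I_N) : {set 'I_K} := [set k | stores n k].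

Definition non_storers (k : 'I_K) : {set 'I_N} := [set n | ~~ stores n k].

Lemma card_cyclic_assignment n :
  (#|cyclic_assignment n| <= K %/ N * (N - Nr + 1))%N.
Proof.
pose s := [seq (i, d) | i <- iota 0 (K %/ N), d <- iota 0 (N - Nr + 1)].
have <- : size s = (K %/ N * (N - Nr + 1))%N by rewrite size_allpairs !size_iota.
apply: (@card_leq_size_in _ _ (cyclic_assignment n)
  (fun k => ((k %/ N)%N, val (n - msg_class k)))).
  move=> k1 k2 _ _ /pair_equal_spec[div_eq /val_inj/addrI/oppr_inj/(congr1 val)/= mod_eq].
  by apply: val_inj; rewrite /= (divn_eq k1 N) (divn_eq k2 N) div_eq mod_eq.
move=> k; rewrite inE /stores => k_stored; apply: allpairs_f; rewrite mem_iota //=.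
  by rewrite ltn_divLR // divnK // ltn_ord.
by rewrite addn1 ltnS.
Qed.

Lemma card_non_storers k : (#|non_storers k| < Nr)%N.
Proof.
apply: (@leq_trans (size (iota (N - Nr).+1 Nr.-1)).+1); last by rewrite size_iota prednK.
rewrite ltnS.
apply: (@card_leq_size_in _ _ (non_storers k) (fun n => val (n - msg_class k))).
  by move=> n1 n2 _ _ /val_inj/addIr.
move=> n; rewrite inE /stores -ltnNge mem_iota => -> /=.
have := ltn_ord (n - msg_class k); lia.
Qed.

End CyclicAssignment.

(* Declares the missing [finZmodType] instances on [{ffun I -> V}]. *)
HB.saturate finfun_of.

Section Messages.
Variables (F : finFieldType) (K L : nat).
Local Notation msgs := (msgs F K L).

Lemma msg_sumB : zmod_morphism (@msg_sum F K L).
Proof.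
by move=> w w'; rewrite /msg_sum -sumrB; apply: eq_bigr => k _; rewrite !ffunE.
Qed.

HB.instance Definition _ := GRing.isZmodMorphism.Build msgs _ (@msg_sum F K L) msg_sumB.

Definition msg_at (k : 'I_K) (x : 'rV[F]_L) : msgs := [ffun j => if j == k then x else 0].

Lemma msg_sum_at k x : msg_sum (msg_at k x) = x.
Proof.
rewrite /msg_sum (bigD1 k) //= ffunE eqxx big1 ?addr0 // => j /negbTE j_k.
by rewrite ffunE j_k.
Qed.

(* For uniform [v], [mask k0 v] is uniform among the zero-sum vectors. *)
Definition mask (k0 : 'I_K) (v : msgs) : msgs := v - msg_at k0 (msg_sum v).

Lemma msg_sum_mask k0 v : msg_sum (mask k0 v) = 0.
Proof. by rewrite raddfB /= msg_sum_at subrr. Qed.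

Lemma mask_shift k0 v d : msg_sum d = 0 -> mask k0 (v + d) = mask k0 v + d.
Proof. by move=> d0; rewrite /mask raddfD /= d0 addr0 addrAC. Qed.

End Messages.

Section CommCost.
Variables (R : realType) (N Nr L : nat).
Hypotheses (Nr_leN : (Nr <= N)%N) (L_gt0 : (0 < L)%N).

Lemma comm_cost_ge (T : 'I_N -> nat) :
  (forall n, L <= T n)%N -> Nr%:R <= comm_cost R Nr L T.
Proof.
move=> T_ge.
have [A _ card_A] : exists2 A : {set 'I_N}, A \subset [set: 'I_N] & #|A| = Nr.
  by apply: subset_card_exists; rewrite cardsT card_ord.
rewrite /comm_cost ler_pdivlMr ?ltr0n // -natrM ler_nat.
apply: leq_trans (leq_bigmax_cond A _); last by rewrite card_A.
by rewrite -card_A -sum1_card big_distrl /= leq_sum // => n _; rewrite mul1n.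
Qed.

Lemma comm_cost_const : comm_cost R Nr L (fun _ : 'I_N => L) = Nr%:R.
Proof.
apply/eqP; rewrite eq_le comm_cost_ge // andbT /comm_cost.
rewrite ler_pdivrMr ?ltr0n // -natrM ler_nat.
by apply/bigmax_leqP => A /eqP card_A; rewrite sum_nat_const card_A.
Qed.

End CommCost.

Section Achievability.
Variables (R : realType) (F : finFieldType) (K N' Nr L : nat).
Local Notation N := N'.+1.
Local Notation msgs := (msgs F K L).
Hypotheses (K_gt0 : (0 < K)%N) (Nr_gt0 : (0 < Nr)%N) (Nr_leN : (Nr <= N)%N).
Hypotheses (N_dvd_K : (N %| K)%N) (F_large : (N.+1 <= #|F|)%N).

(* [N + 1] distinct field elements: one per server, and [eval_point ord_max]
   where the decoders interpolate. *)
Definition eval_point (i : 'I_N.+1) : F := enum_val (widen_ord F_large i).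

Lemma eval_point_inj : injective eval_point.
Proof. by move=> i j /enum_val_inj [] /val_inj. Qed.

Definition server_point (n : 'I_N) : F := eval_point (lift ord_max n).

Definition coef_poly (k : 'I_K) : {poly F} :=
  pinned_poly [seq server_point m | m <- enum (non_storers N' Nr k)] (eval_point ord_max).

Definition enc_coef (n : 'I_N) (k : 'I_K) : F := (coef_poly k).[server_point n].

Definition encode (n : 'I_N) (y : msgs) : 'rV[F]_L := \sum_k enc_coef n k *: y k.

Lemma enc_coef_eq0 n k : k \notin cyclic_assignment K Nr n -> enc_coef n k = 0.
Proof.
rewrite inE => not_stored.
by rewrite /enc_coef pinned_poly_root // map_f // mem_enum inE.
Qed.

Lemma decoding_coef (A : {set 'I_N}) : #|A| = Nr ->
  exists c : 'I_N -> F, forall k, \sum_(n in A) c n * enc_coef n k = 1.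
Proof.
move=> card_A; have point_inj : {in A &, injective server_point}.
  by move=> n m _ _ /eval_point_inj/lift_inj.
have [c c_interp] := interpolation_coef (eval_point ord_max) point_inj.
exists c => k; set s := [seq server_point m | m <- enum (non_storers N' Nr k)].
have /pinned_poly_pin <- : eval_point ord_max \notin s.
  by apply/mapP => -[m _ /eval_point_inj/eqP]; rewrite (negbTE (neq_lift _ _)).
rewrite c_interp // card_A (leq_trans (size_pinned_poly _ _)) //.
by rewrite size_map -cardE card_non_storers.
Qed.

Definition uniform_msgs (v : msgs) : R := (#|msgs|%:R)^-1.

Definition masked_enc (n : 'I_N) (w v : msgs) : 'rV[F]_L :=
  encode n (w + mask (Ordinal K_gt0) v).

Lemma masked_enc_secure :
  secure_scheme Nr (K %/ N * (N - Nr + 1)) uniform_msgs (cyclic_assignment K Nr)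
    masked_enc.
Proof.
have card_msgs_neq0 : (#|msgs|%:R : R) != 0.
  by rewrite pnatr_eq0 -lt0n; apply/card_gt0P; exists 0.
split; first by move=> v; rewrite invr_ge0 ler0n.
split; first by rewrite sumr_const -[X in X = 1]mulr_natr mulVf.
split; first exact: card_cyclic_assignment.
split.
  move=> n w w' v w_w'; apply: eq_bigr => k _; rewrite !ffunE.
  have [/w_w' -> //|/enc_coef_eq0 ->] := boolP (k \in cyclic_assignment K Nr n).
  by rewrite !scale0r.
split.
  move=> A /decoding_coef[c c_dec].
  exists (fun y => \sum_(n in A) c n *: y n) => w v _ /=.
  rewrite (eq_bigr (fun n => c n *: encode n (w + mask (Ordinal K_gt0) v))) => [|n ->] //.
  rewrite /encode; under eq_bigr do rewrite scaler_sumr.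
  transitivity (msg_sum (w + mask (Ordinal K_gt0) v)).
    rewrite exchange_big /=; apply: eq_bigr => k _; under eq_bigr do rewrite scalerA.
    by rewrite -scaler_suml c_dec scale1r.
  by rewrite raddfD /= msg_sum_mask addr0.
pose H y : {dffun forall n : 'I_N, 'rV[F]_((fun=> L) n)} := [ffun n => encode n y].
exact: (masked_cond_mutual_info_eq0 (V := {ffun 'I_K -> 'rV[F]_L})
  (sigma := @msg_sum F K L) H (mask_shift _) ((#|msgs|%:R)^-1 / (#|F| ^ (K * L))%:R)).
Qed.

End Achievability.

Section Converse.
Variables (F : finFieldType) (K N Nr L : nat) (S : finType) (s0 : S).
Variables (Z : 'I_N -> {set 'I_K}) (T : 'I_N -> nat).
Variable psi : forall n : 'I_N, msgs F K L -> S -> 'rV[F]_(T n).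
Local Notation msgs := (msgs F K L).
Hypotheses (K_gt0 : (0 < K)%N) (Nr_gt0 : (0 < Nr)%N) (Nr_leN : (Nr <= N)%N).
Hypotheses (N_dvd_K : (N %| K)%N) (L_gt0 : (0 < L)%N).
Hypothesis card_Z : forall n, (#|Z n| <= K %/ N * (N - Nr + 1))%N.
Hypothesis psi_local : forall n (w w' : msgs) s,
  (forall k, k \in Z n -> w k = w' k) -> psi n w s = psi n w' s.
Hypothesis psi_decodable : forall A : {set 'I_N}, #|A| = Nr ->
  exists phi : (forall n : 'I_N, 'rV[F]_(T n)) -> 'rV[F]_L,
    forall w, phi (fun n => if n \in A then psi n w s0 else 0) = msg_sum w.

Definition storers (k : 'I_K) : {set 'I_N} := [set n | k \in Z n].

Lemma decode_eq (A : {set 'I_N}) (w w' : msgs) : #|A| = Nr ->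
  {in A, forall n, psi n w s0 = psi n w' s0} -> msg_sum w = msg_sum w'.
Proof.
move=> /psi_decodable[phi decode] eq_answers; rewrite -!decode; congr phi.
by apply: functional_extensionality_dep => n; case: ifP => // /eq_answers.
Qed.

Lemma psi_msg_at n k x y s : k \notin Z n -> psi n (msg_at k x) s = psi n (msg_at k y) s.
Proof.
move=> k_notin; apply: psi_local => j j_in; rewrite !ffunE.
by case: eqP => // j_k; rewrite -j_k j_in in k_notin.
Qed.

Lemma card_storersC_lt k : (#|~: storers k| < Nr)%N.
Proof.
rewrite ltnNge; apply/negP => /subset_card_exists[A /fintype.subsetP sA card_A].
have : msg_sum (msg_at k (const_mx 1 : 'rV[F]_L)) = msg_sum (msg_at k 0).
  by apply: (@decode_eq A _ _ card_A) => n /sA; rewrite !inE; exact: psi_msg_at.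
rewrite !msg_sum_at => /matrixP/(_ 0 (Ordinal L_gt0)); rewrite !mxE.
by apply/eqP; exact: oner_neq0.
Qed.

Lemma storage_budget : (\sum_(n < N) K %/ N * (N - Nr + 1) = \sum_(k < K) (N - Nr + 1))%N.
Proof. by rewrite !sum_nat_const !card_ord mulnA [(N * _)%N]mulnC divnK. Qed.

Lemma card_storers k : #|storers k| = (N - Nr + 1)%N.
Proof.
suff storers_ge j : (N - Nr + 1 <= #|storers j|)%N.
  symmetry; apply: (@leq_sum_eq _ (fun=> N - Nr + 1)%N (fun j => #|storers j|)) => //.
  rewrite -storage_budget sum_card_incidence.
  exact: leq_sum.
move: (cardsC (storers j)) (card_storersC_lt j); rewrite card_ord.
clear -Nr_leN; lia.
Qed.

Lemma card_assignment n : #|Z n| = (K %/ N * (N - Nr + 1))%N.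
Proof.
apply: (@leq_sum_eq _ (fun n => #|Z n|) (fun=> K %/ N * (N - Nr + 1))%N) => //.
rewrite storage_budget -sum_card_incidence.
by under [X in (_ <= X)%N]eq_bigr do rewrite card_storers.
Qed.

Lemma answer_len_ge n : (L <= T n)%N.
Proof.
have N_gt0 : (0 < N)%N := leq_trans Nr_gt0 Nr_leN.
have [k k_in] : exists k, k \in Z n.
  apply/set0Pn; rewrite -card_gt0 card_assignment muln_gt0 addn1 andbT.
  by rewrite divn_gt0 // dvdn_leq.
have card_A : #|n |: ~: storers k| = Nr.
  rewrite cardsU1 !inE k_in add1n; have := cardsC (storers k).
  rewrite card_ord card_storers; move: #|_| => c; lia.
suff inj_enc : injective (fun x : 'rV[F]_L => psi n (msg_at k x) s0).
  have := @leq_card _ _ _ inj_enc; rewrite !card_mx !mul1n leq_exp2l //.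
  exact: card_finNzRing_gt1.
move=> x y eq_xy; rewrite -(msg_sum_at k x) -(msg_sum_at k y).
apply: (@decode_eq _ _ _ card_A) => m; rewrite !inE.
by case: eqP => [-> //|_ k_notin]; exact: psi_msg_at.
Qed.

End Converse.

Lemma secure_scheme_cost_ge (R : realType) (F : finFieldType) (K N Nr L : nat)
    (S : finType) (pQ : S -> R) (Z : 'I_N -> {set 'I_K}) (T : 'I_N -> nat)
    (psi : forall n : 'I_N, msgs F K L -> S -> 'rV[F]_(T n)) :
  (0 < K)%N -> (0 < Nr)%N -> (Nr <= N)%N -> (N %| K)%N -> (0 < L)%N ->
  secure_scheme Nr (K %/ N * (N - Nr + 1)) pQ Z psi -> Nr%:R <= comm_cost R Nr L T.
Proof.
move=> K_gt0 Nr_gt0 Nr_leN N_dvd_K L_gt0.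
case=> pQ_ge0 [pQ_sum1 [card_Z [psi_local [psi_dec _]]]].
have [s0 pQ_s0] : exists s, 0 < pQ s.
  apply/existsP; apply: contraT => /existsPn pQ_le0.
  rewrite -(oner_eq0 R) -pQ_sum1 psumr_eq0 //; apply/allP => s _.
  by rewrite eq_le pQ_ge0 andbT leNgt pQ_le0.
apply: comm_cost_ge => // n.
apply: (answer_len_ge (s0 := s0) K_gt0 Nr_gt0 Nr_leN N_dvd_K L_gt0 card_Z psi_local).
by move=> A /psi_dec[phi dec]; exists phi => w; exact: dec.
Qed.

Theorem theorem1 (R : realType) (K N Nr L : nat) :
  (0 < K)%N -> (0 < N)%N -> (0 < Nr)%N -> (Nr <= N)%N -> (N %| K)%N ->
  (0 < L)%N ->
  exists q0 : nat, forall F : finFieldType, (q0 <= #|F|)%N ->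
    let M := (K %/ N * (N - Nr + 1))%N in
    (* R* = N_r : N_r is attained by a secure scheme ... *)
    (exists (S : finType) (pQ : S -> R) (Z : 'I_N -> {set 'I_K})
            (T : 'I_N -> nat)
            (psi : forall n : 'I_N, msgs F K L -> S -> 'rV[F]_(T n)),
        secure_scheme Nr M pQ Z psi /\ comm_cost R Nr L T = Nr%:R) /\
    (* ... and no secure scheme has smaller cost *)
    (forall (S : finType) (pQ : S -> R) (Z : 'I_N -> {set 'I_K})
            (T : 'I_N -> nat)
            (psi : forall n : 'I_N, msgs F K L -> S -> 'rV[F]_(T n)),
        secure_scheme Nr M pQ Z psi -> Nr%:R <= comm_cost R Nr L T).
Proof.
move=> K_gt0 N_gt0 Nr_gt0 Nr_leN N_dvd_K L_gt0; exists N.+1 => F F_large M.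
split=> [|S pQ Z T psi]; last exact: secure_scheme_cost_ge.
case: N N_gt0 Nr_leN N_dvd_K F_large @M => // N' _ Nr_leN N_dvd_K F_large.
exists (msgs F K L), (@uniform_msgs R F K L), (cyclic_assignment K Nr), (fun=> L).
exists (masked_enc Nr K_gt0 F_large); split; first exact: masked_enc_secure.
exact: comm_cost_const.
Qed.
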